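(* Let $\mathcal{C}$ be a concept class over $\{\pm1\}^n$, $\mathcal{D}$ a class of distributions closed under restrictions, $D^\star$ a distribution with a depth-$d$ decomposition into distributions in $\mathcal{D}$, and $A$ a base learner using $m$ samples that learns $\mathcal{C}$ to expected error $\le\varepsilon$ under any $D\in\mathcal{D}$. Let \[ m_{\mathrm{train}} \ge \frac{2^d}{\varepsilon}\cdot\max(2m, 8), \] let $f\in\mathcal{C}$, and let $S_{\mathrm{train}}$ consist of $m_{\mathrm{train}}$ i.i.d. examples from $D^\star_f$. Let $\mathcal{H}$ be the random mapping $\rho\mapsto A((S_{\mathrm{train}})_\rho)$ over all depth-$d$ restrictions $\rho$ (randomness from $S_{\mathrm{train}}$ and $A$). Then \[ \mathbb{E}_{\mathcal{H}}\left[\min_{\text{depth-}d\text{ tree }T} \mathrm{error}(T\circ\mathcal{H}, D^\star_f)\right] \le 2\varepsilon. \]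
   Context: A restriction is $\rho\in\{\pm1,\star\}^n$; $x\in\rho$ means $x_i=\rho_i$ or $\rho_i=\star$ for all $i$; depth of $\rho$ = number of non-$\star$ coordinates. $D_\rho$ is $D$ conditioned on $x\in\rho$; for a labeled set $S$, $S_\rho=\{(x,y)\in S:x\in\rho\}$. $\mathcal{D}$ is closed under restrictions if $D\in\mathcal{D}\Rightarrow D_\rho\in\mathcal{D}$ for all $\rho$. $D_f$ is the distribution of $(x,f(x))$, $x\sim D$; $\mathrm{error}(h,P)=\Pr_{(x,y)\sim P}[h(x)\ne y]$. $A$ learns $\mathcal{C}$ to expected error $\varepsilon$ under $D$ using $m$ samples if for every $f\in\mathcal{C}$, given (at least) $m$ i.i.d. samples from $D_f$, its output $h$ has $\mathbb{E}[\mathrm{error}(h,D_f)]\le\varepsilon$. A depth-$d$ decision tree is a set of $2^d$ leaf restrictions defined recursively: depth $0$ is the all-$\star$ restriction; depth $d\ge1$ has a root coordinate $i$ and two depth-$(d-1)$ subtrees not fixing $i$, whose leaves get coordinate $i$ set to $-1$ and $+1$. $D^\star$ has a depth-$d$ decomposition into $\mathcal{D}$ if some depth-$d$ tree $T$ has $(D^\star)_\ell\in\mathcal{D}$ for every leaf $\ell$. $T\circ\mathcal{H}(x)=\mathcal{H}(\ell)(x)$ for the leaf $\ell$ of $T$ containing $x$. *)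

(* everything is finite ({±1}^n is finite), so all
   probabilities/expectations are finite sums over an arbitrary real field. *)
From mathcomp Require Import all_boot all_order all_algebra.
Set Implicit Arguments. Unset Strict Implicit. Unset Printing Implicit Defensive.
Import Order.TTheory GRing.Theory Num.Theory.
Local Open Scope ring_scope.

(* points of {±1}^n : true = +1, false = -1 *)
Definition pt (n : nat) := {ffun 'I_n -> bool}.
(* restrictions rho in {±1,*}^n : None = *, Some b = fixed value b *)
Definition rst (n : nat) := {ffun 'I_n -> option bool}.
Definition hyp (n : nat) := {ffun pt n -> bool}.

Definition in_rst n (x : pt n) (r : rst n) : bool :=
  [forall i, (r i == None) || (r i == Some (x i))].

Definition depth n (r : rst n) : nat := #|[set i | r i != None]|.

Definition star n : rst n := [ffun _ => None].

Definition fix_coord n (r : rst n) (i : 'I_n) (b : bool) : rst n :=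
  [ffun j => if j == i then Some b else r j].

(* T is (the set of leaves of) a depth-d decision tree, defined recursively *)
Fixpoint is_tree n (d : nat) (T : {set rst n}) : bool :=
  match d with
  | 0 => T == [set star n]
  | d'.+1 =>
    [exists i : 'I_n, exists T0 : {set rst n}, exists T1 : {set rst n},
      [&& is_tree d' T0, is_tree d' T1,
          [forall l in T0, l i == None], [forall l in T1, l i == None] &
          T == ((fun l => fix_coord l i false) @: T0)
               :|: ((fun l => fix_coord l i true) @: T1)]]
  end.

Definition is_dist (R : realFieldType) (T : finType) (P : {ffun T -> R}) : Prop :=
  (forall t, 0 <= P t) /\ \sum_t P t = 1.

Definition mass (R : realFieldType) n (D : {ffun pt n -> R}) (r : rst n) : R :=
  \sum_(x | in_rst x r) D x.

Definition cond (R : realFieldType) n (D : {ffun pt n -> R}) (r : rst n)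
  : {ffun pt n -> R} :=
  [ffun x => if in_rst x r then D x / mass D r else 0].

(* closed under restrictions (conditioning is defined when D(rho) > 0) *)
Definition closed_under_restrictions (R : realFieldType) n
  (Dc : {ffun pt n -> R} -> Prop) : Prop :=
  forall (D : {ffun pt n -> R}) (r : rst n), Dc D -> 0 < mass D r -> Dc (cond D r).

Definition error (R : realFieldType) n (h : hyp n) (D : {ffun pt n -> R})
  (f : hyp n) : R :=
  \sum_x D x * (h x != f x)%:R.

(* depth-d decomposition of D into Dc (leaves of zero mass impose nothing) *)
Definition has_decomposition (R : realFieldType) n (D : {ffun pt n -> R})
  (Dc : {ffun pt n -> R} -> Prop) (d : nat) : Prop :=
  exists T : {set rst n}, is_tree d T /\
    forall l, l \in T -> 0 < mass D l -> Dc (cond D l).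

Definition sample n k (xs : {ffun 'I_k -> pt n}) (f : hyp n) : seq (pt n * bool) :=
  [seq (xs i, f (xs i)) | i <- enum 'I_k].

Definition restrict_sample n (S : seq (pt n * bool)) (r : rst n) :=
  [seq p <- S | in_rst p.1 r].

(* randomized learner: sample -> distribution over output hypotheses *)
Definition learner (R : realFieldType) n := seq (pt n * bool) -> {ffun hyp n -> R}.

Definition learns (R : realFieldType) n (C : hyp n -> Prop)
  (Dc : {ffun pt n -> R} -> Prop) (A : learner R n) (m : nat) (eps : R) : Prop :=
  forall (D : {ffun pt n -> R}) (f : hyp n), Dc D -> C f ->
  forall k : nat, (m <= k)%N ->
    \sum_(xs : {ffun 'I_k -> pt n}) (\prod_i D (xs i)) *
       (\sum_(h : hyp n) A (sample xs f) h * error h D f) <= eps.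

Definition tree_comp n (T : {set rst n}) (H : {ffun rst n -> hyp n}) : hyp n :=
  [ffun x => if [pick l in T | in_rst x l] is Some l then H l x else false].

(* min over depth-d trees T of error(T o H, D_f); 1 is the neutral element
   (all errors are <= 1 and the set of depth-d trees is nonempty under the
   decomposition hypothesis) *)
Definition min_tree_error (R : realFieldType) n (d : nat)
  (H : {ffun rst n -> hyp n}) (D : {ffun pt n -> R}) (f : hyp n) : R :=
  \big[Order.min/1]_(T : {set rst n} | is_tree d T) error (tree_comp T H) D f.

(* E_H [ min_T error(T o H, D_f) ] where S_train ~ (D_f)^mt and
   H(rho) = A((S_train)_rho), independently for each restriction rho *)
Definition expected_min_tree_error (R : realFieldType) n (A : learner R n)
  (Ds : {ffun pt n -> R}) (f : hyp n) (d mt : nat) : R :=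
  \sum_(xs : {ffun 'I_mt -> pt n}) (\prod_i Ds (xs i)) *
    (\sum_(H : {ffun rst n -> hyp n})
        (\prod_(r : rst n) A (restrict_sample (sample xs f) r) (H r)) *
        min_tree_error d H Ds f).

From mathcomp Require Import all_boot all_order all_algebra.
From mathcomp Require Import ring.
Import Order.TTheory GRing.Theory Num.Theory.
Set Implicit Arguments. Unset Strict Implicit. Unset Printing Implicit Defensive.
Local Open Scope ring_scope.

(* Fix a tree T witnessing the decomposition; the minimum over trees is at most the error of
   T o H, which splits into one term per leaf. For a leaf l of mass p, the restricted sample
   has Binomial(mt, p) size and, given its size k, is k i.i.d. draws from D_l. The base learner
   therefore contributes at most p * (eps + Pr[Bin(mt, p) < m]) on l, and
   p * Pr[Bin(mt, p) < m] <= m / (mt + 1) because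
   p * C(N, k) p^k (1-p)^(N-k) = (k+1)/(N+1) * C(N+1, k+1) p^(k+1) (1-p)^(N-k).
   Summing over the at most 2^d leaves gives eps + 2^d m / (mt + 1) <= 2 eps. *)

Section DecisionTrees.
Variable n : nat.
Implicit Types (T : {set rst n}) (l : rst n) (x : pt n).

Lemma in_fix_coord x l i b :
  l i == None -> in_rst x (fix_coord l i b) = (x i == b) && in_rst x l.
Proof.
move=> /eqP li; apply/forallP/andP => [H | [/eqP xi /forallP H] j].
  split; first by have := H i; rewrite ffunE eqxx /= => /eqP [->].
  apply/forallP => j; have := H j; rewrite ffunE.
  by have [->|//] := eqVneq j i; rewrite li.
rewrite ffunE; have [->|_] := eqVneq j i; last exact: H.
by rewrite xi eqxx orbT.
Qed.

Lemma in_fix_coord_imset T i b x l' :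
  {in T, forall l, l i == None} ->
  l' \in [set fix_coord l i b | l in T] -> in_rst x l' ->
  exists2 l, l \in T & [/\ l' = fix_coord l i b, in_rst x l & x i = b].
Proof.
move=> noi /imsetP [l lT ->]; rewrite in_fix_coord ?noi //.
by case/andP => /eqP xi xl; exists l.
Qed.

Lemma card_tree d T : is_tree d T -> (#|T| <= 2 ^ d)%N.
Proof.
elim: d T => [|d IH] T /=; first by move/eqP => ->; rewrite cards1.
case/existsP => i /existsP [T0 /existsP [T1 /and5P [t0 t1 _ _ /eqP ->]]].
rewrite expnS mul2n -addnn; apply: leq_trans (leq_card_setU _ _).1 _.
by apply: leq_add; apply: leq_trans (leq_imset_card _ _) _; apply: IH.
Qed.

Lemma tree_unique_leaf d T x : is_tree d T ->
  exists l, [/\ l \in T, in_rst x l & {in T, forall l', in_rst x l' -> l' = l}].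
Proof.
elim: d T => [|d IH] T /=.
  move/eqP => ->; exists (star n); split; first by rewrite in_set1.
    by apply/forallP => i; rewrite ffunE.
  by move=> l'; rewrite in_set1 => /eqP.
case/existsP => i /existsP [T0 /existsP [T1]].
case/and5P => t0 t1 /forall_inP n0 /forall_inP n1 /eqP ->.
have unique_leaf_on_side b (Tb To : {set rst n}) : is_tree d Tb ->
    {in Tb, forall l, l i == None} -> {in To, forall l, l i == None} -> x i = b ->
  exists l, [/\ l \in [set fix_coord l i b | l in Tb] :|: [set fix_coord l i (~~ b) | l in To],
    in_rst x l & {in [set fix_coord l i b | l in Tb] :|: [set fix_coord l i (~~ b) | l in To],
                  forall l', in_rst x l' -> l' = l}].
  move=> tb nb no xib; have [l [lT xl ul]] := IH _ tb.
  exists (fix_coord l i b); split.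
  - by apply/setUP; left; apply: imset_f.
  - by rewrite in_fix_coord ?xib ?eqxx ?nb.
  move=> l' /setUP [] lT' xl'.
    by have [l2 l2T [-> xl2 _]] := in_fix_coord_imset nb lT' xl'; rewrite (ul _ l2T xl2).
  have [_ _ [_ _]] := in_fix_coord_imset no lT' xl'.
  by rewrite xib; case: b {xib lT'}.
case xi: (x i); first rewrite setUC; exact: unique_leaf_on_side.
Qed.

Lemma pick_tree_leaf d T x : is_tree d T -> exists l, [pick l in T | in_rst x l] = Some l.
Proof.
move=> tT; have [l0 [l0T xl0 _]] := tree_unique_leaf x tT.
case: pickP => [l _ | none]; first by exists l.
by have := none l0; rewrite l0T xl0.
Qed.

Lemma sum_tree_leaves (R : realFieldType) d T (F : rst n -> pt n -> R) : is_tree d T ->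
  \sum_(l in T) \sum_(x | in_rst x l) F l x =
  \sum_x (if [pick l in T | in_rst x l] is Some l then F l x else 0).
Proof.
move=> tT; rewrite (exchange_big_dep predT) //=; apply: eq_bigr => x _.
case: pickP => [l /andP[lT xl] | none]; last by rewrite big_pred0.
rewrite (bigD1 l) ?lT ?xl //= big1 ?addr0 // => l' /andP[/andP[l'T xl'] ne].
have [l0 [_ _ u]] := tree_unique_leaf x tT.
by move: ne; rewrite (u _ l'T xl') (u _ lT xl) eqxx.
Qed.

End DecisionTrees.

Lemma sum_prod_ffun_marginal (R : realFieldType) (I J : finType) (a : I -> J -> R)
    (i : I) (g : J -> R) :
  (forall r, \sum_j a r j = 1) ->
  \sum_(F : {ffun I -> J}) (\prod_r a r (F r)) * g (F i) = \sum_j a i j * g j.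
Proof.
move=> a1; pose b r j := a r j * (if r == i then g j else 1).
have -> : \sum_(F : {ffun I -> J}) (\prod_r a r (F r)) * g (F i) =
          \sum_(F : {ffun I -> J}) \prod_r b r (F r).
  apply: eq_bigr => F _; rewrite /b big_split /=; congr (_ * _).
  by rewrite (bigD1 i) //= eqxx big1 ?mulr1 // => r /negbTE ->.
rewrite -bigA_distr_bigA (bigD1 i) //= [X in _ * X]big1 ?mulr1.
  by apply: eq_bigr => j _; rewrite /b eqxx.
by move=> r /negbTE ri; under eq_bigr do rewrite /b ri mulr1; apply: a1.
Qed.

Section Distributions.
Variables (R : realFieldType) (n : nat).
Implicit Types (D : {ffun pt n -> R}) (l : rst n).

Lemma sum_dist_le1 (T : finType) (a : {ffun T -> R}) (g : T -> R) :
  is_dist a -> (forall t, g t <= 1) -> \sum_t a t * g t <= 1.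
Proof.
case=> a0 a1 g1; rewrite -a1; apply: ler_sum => t _.
by rewrite ler_piMr.
Qed.

Lemma error_le1 (h : hyp n) D f : is_dist D -> error h D f <= 1.
Proof. by move=> dD; apply: sum_dist_le1 => // x; rewrite lern1 leq_b1. Qed.

Lemma mass_ge0 D l : is_dist D -> 0 <= mass D l.
Proof. by case=> D0 _; apply: sumr_ge0. Qed.

Lemma mass_le1 D l : is_dist D -> mass D l <= 1.
Proof.
case=> D0 D1; rewrite -D1 /mass [leRHS](bigID (fun x => in_rst x l)) /=.
by rewrite lerDl sumr_ge0.
Qed.

Lemma cond_is_dist D l : is_dist D -> 0 < mass D l -> is_dist (cond D l).
Proof.
case=> D0 _ pl; split=> [x|].
  by rewrite ffunE; case: ifP => // _; rewrite divr_ge0 // ltW.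
rewrite -(divff (lt0r_neq0 pl)) [in RHS]/mass mulr_suml [RHS]big_mkcond /=.
by apply: eq_bigr => x _; rewrite ffunE.
Qed.

End Distributions.

Section BinomialDistribution.
Variable R : realFieldType.
Implicit Type p : R.

Definition binom_pmf p N k : R := 'C(N, k)%:R * p ^+ k * (1 - p) ^+ (N - k).

Lemma binom_pmf00 p : binom_pmf p 0 0 = 1.
Proof. by rewrite /binom_pmf bin0 !expr0 !mulr1. Qed.

Lemma binom_pmfS0 p N : binom_pmf p N.+1 0 = (1 - p) * binom_pmf p N 0.
Proof. by rewrite /binom_pmf !bin0 !subn0 exprS; ring. Qed.

Lemma binom_pmf_small p N k : (N < k)%N -> binom_pmf p N k = 0.
Proof. by move=> Nk; rewrite /binom_pmf bin_small // !mul0r. Qed.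

Lemma binom_pmfSS p N k :
  binom_pmf p N.+1 k.+1 = p * binom_pmf p N k + (1 - p) * binom_pmf p N k.+1.
Proof.
rewrite /binom_pmf binS natrD subSS.
have [kN|Nk] := ltnP k N; first by rewrite -(subnSK kN) !exprS; ring.
by rewrite (@bin_small N k.+1) ?ltnS // !exprS; ring.
Qed.

Lemma binom_pmf_ge0 p N k : 0 <= p <= 1 -> 0 <= binom_pmf p N k.
Proof.
by case/andP => p0 p1; rewrite /binom_pmf !mulr_ge0 ?exprn_ge0 ?subr_ge0.
Qed.

Lemma sum_binom_pmf p N : \sum_(0 <= k < N.+1) binom_pmf p N k = 1.
Proof.
have := exprDn (1 - p) p N; rewrite subrK expr1n => ->.
by rewrite big_mkord; apply: eq_bigr => k _; rewrite /binom_pmf mulr_natl; ring.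
Qed.

Lemma mul_binom_pmf p N k :
  p * binom_pmf p N k = k.+1%:R / N.+1%:R * binom_pmf p N.+1 k.+1.
Proof.
rewrite /binom_pmf subSS.
have binS_eq : 'C(N.+1, k.+1)%:R = N.+1%:R * 'C(N, k)%:R / k.+1%:R :> R.
  by rewrite -natrM (mul_bin_diag N.+1 k) natrM mulrAC divff ?mul1r ?pnatr_eq0.
rewrite binS_eq exprS; field.
by rewrite !(addrC 1) !natr1 !pnatr_eq0.
Qed.

Lemma binom_pmf_mix p N (Q : nat -> R) :
  \sum_(0 <= k < N.+1) binom_pmf p N k * (p * Q k.+1 + (1 - p) * Q k) =
  \sum_(0 <= k < N.+2) binom_pmf p N.+1 k * Q k.
Proof.
have shift : \sum_(0 <= k < N.+1) binom_pmf p N k * Q k =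
    binom_pmf p N 0 * Q 0 + \sum_(0 <= k < N.+1) binom_pmf p N k.+1 * Q k.+1.
  rewrite big_nat_recl // [in RHS]big_nat_recr //=.
  by rewrite (binom_pmf_small _ (ltnSn N)) mul0r addr0.
rewrite [in RHS]big_nat_recl // binom_pmfS0.
under [in LHS]eq_bigr do rewrite mulrDr mulrCA [X in _ + X]mulrCA.
under [in RHS]eq_bigr do rewrite binom_pmfSS mulrDl -(mulrA p) -(mulrA (1 - p)).
by rewrite !big_split -!mulr_sumr shift /=; ring.
Qed.

Lemma binom_tail_bound p N m : 0 <= p <= 1 ->
  p * \sum_(0 <= k < N.+1) binom_pmf p N k * (k < m)%:R <= m%:R / N.+1%:R.
Proof.
move=> p01; rewrite mulr_sumr.
apply: le_trans (_ : \sum_(0 <= k < N.+1) m%:R / N.+1%:R * binom_pmf p N.+1 k.+1 <= _).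
  apply: ler_sum => k _; rewrite mulrA mul_binom_pmf mulrAC ler_wpM2r ?binom_pmf_ge0 //.
  rewrite mulrAC ler_wpM2r ?invr_ge0 // -natrM ler_nat.
  by case: ltnP => km; rewrite ?muln1 ?muln0.
rewrite -mulr_sumr ler_piMr ?divr_ge0 //.
have := sum_binom_pmf p N.+1; rewrite big_nat_recl // => <-.
by rewrite lerDr binom_pmf_ge0.
Qed.

End BinomialDistribution.

Section Sampling.
Variables (R : realFieldType) (n : nat).
Implicit Types (D : {ffun pt n -> R}) (f : hyp n) (l : rst n) (G : seq (pt n * bool) -> R).

Definition fcons N (x : pt n) (ys : {ffun 'I_N -> pt n}) : {ffun 'I_N.+1 -> pt n} :=
  [ffun i => if unlift ord0 i is Some j then ys j else x].

Lemma sum_ffunS N (Phi : {ffun 'I_N.+1 -> pt n} -> R) :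
  \sum_xs Phi xs = \sum_x \sum_(ys : {ffun 'I_N -> pt n}) Phi (fcons x ys).
Proof.
rewrite pair_bigA /= (reindex (fun p : pt n * {ffun 'I_N -> pt n} => fcons p.1 p.2)) //=.
exists (fun xs => (xs ord0, [ffun j => xs (lift ord0 j)])) => [[x ys] _ | xs _] /=.
  by congr (_, _); [rewrite ffunE unlift_none | apply/ffunP => j; rewrite !ffunE liftK].
by apply/ffunP => i; rewrite !ffunE; case: unliftP => [j ->|->]; rewrite ?ffunE.
Qed.

Lemma sum_ffun0 (Phi : {ffun 'I_0 -> pt n} -> R) xs0 : \sum_xs Phi xs = Phi xs0.
Proof.
rewrite (eq_bigr (fun _ => Phi xs0)) ?sumr_const ?card_ffun ?card_ord ?expn0 //.
by move=> xs _; congr Phi; apply/ffunP => -[].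
Qed.

Lemma sum_prod_ffunS N D (Phi : {ffun 'I_N.+1 -> pt n} -> R) :
  \sum_(xs : {ffun 'I_N.+1 -> pt n}) (\prod_i D (xs i)) * Phi xs =
  \sum_x D x * \sum_(ys : {ffun 'I_N -> pt n}) (\prod_i D (ys i)) * Phi (fcons x ys).
Proof.
rewrite sum_ffunS; apply: eq_bigr => x _; rewrite mulr_sumr; apply: eq_bigr => ys _.
rewrite big_ord_recl !ffunE unlift_none -mulrA; congr (_ * (_ * _)).
by apply: eq_bigr => i _; rewrite ffunE liftK.
Qed.

Lemma sample_fcons N (x : pt n) (ys : {ffun 'I_N -> pt n}) f :
  sample (fcons x ys) f = (x, f x) :: sample ys f.
Proof.
rewrite /sample enum_ordSl /= !ffunE unlift_none -map_comp; congr (_ :: _).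
by apply: eq_map => j /=; rewrite ffunE liftK.
Qed.

Lemma sample_ffun0 (xs : {ffun 'I_0 -> pt n}) f : sample xs f = [::].
Proof. by apply/size0nil; rewrite size_map size_enum_ord. Qed.

Definition Esample D f k G :=
  \sum_(ys : {ffun 'I_k -> pt n}) (\prod_i D (ys i)) * G (sample ys f).

Definition Esample_restrict D f l N G :=
  \sum_(xs : {ffun 'I_N -> pt n}) (\prod_i D (xs i)) * G (restrict_sample (sample xs f) l).

Let xs0 : {ffun 'I_0 -> pt n} := [ffun i => [ffun _ => true]].

Lemma Esample0 D f G : Esample D f 0 G = G [::].
Proof. by rewrite /Esample (sum_ffun0 _ xs0) big_ord0 mul1r sample_ffun0. Qed.

Lemma EsampleS D f k G :
  Esample D f k.+1 G = \sum_x D x * Esample D f k (fun S => G ((x, f x) :: S)).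
Proof.
rewrite /Esample sum_prod_ffunS; apply: eq_bigr => x _; congr (_ * _).
by apply: eq_bigr => ys _; rewrite sample_fcons.
Qed.

Lemma Esample_restrict0 D f l G : Esample_restrict D f l 0 G = G [::].
Proof. by rewrite /Esample_restrict (sum_ffun0 _ xs0) big_ord0 mul1r sample_ffun0. Qed.

Lemma Esample_restrictS D f l N G :
  Esample_restrict D f l N.+1 G = \sum_x D x *
    Esample_restrict D f l N (fun S => G (if in_rst x l then (x, f x) :: S else S)).
Proof.
rewrite /Esample_restrict sum_prod_ffunS; apply: eq_bigr => x _; congr (_ * _).
by apply: eq_bigr => ys _; rewrite sample_fcons.
Qed.

Lemma ler_Esample D f k G1 G2 : (forall x, 0 <= D x) ->
  (forall S, G1 S <= G2 S) -> Esample D f k G1 <= Esample D f k G2.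
Proof.
move=> D0 G12; apply: ler_sum => ys _; apply: ler_wpM2l => //.
exact: prodr_ge0.
Qed.

Lemma Esample1 D f k : is_dist D -> Esample D f k (fun _ => 1) = 1.
Proof.
case=> _ D1; elim: k => [|k IH]; first by rewrite Esample0.
by rewrite EsampleS -[RHS]D1; apply: eq_bigr => x _; rewrite IH mulr1.
Qed.

End Sampling.

Section RestrictedSample.
Variables (R : realFieldType) (n : nat) (D : {ffun pt n -> R}) (f : hyp n) (l : rst n).
Hypotheses (dD : is_dist D) (pos_mass : 0 < mass D l).

Lemma Esample_cond_step k (G : seq (pt n * bool) -> R) :
  \sum_x D x * (if in_rst x l then Esample (cond D l) f k (fun S => G ((x, f x) :: S))
                else Esample (cond D l) f k G)
  = mass D l * Esample (cond D l) f k.+1 G + (1 - mass D l) * Esample (cond D l) f k G.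
Proof.
have [_ D1] := dD.
have mass_compl : 1 - mass D l = \sum_x (if in_rst x l then 0 else D x).
  rewrite -D1 /mass (bigID (fun x => in_rst x l)) /= addrC addrK big_mkcond /=.
  by apply: eq_bigr => x _; case: (in_rst x l).
rewrite mass_compl EsampleS mulr_sumr [_ * Esample _ _ k G]mulr_suml -big_split /=.
apply: eq_bigr => x _; rewrite mulrA ffunE.
case: (in_rst x l); last by rewrite mulr0 !mul0r add0r.
by rewrite mul0r addr0 mulrCA mulfV ?mulr1 // gt_eqF.
Qed.

(* The size of the restricted sample is Binomial(N, D(l)), and given its size k it is a sample of
   k i.i.d. draws from D_l. *)
Lemma Esample_restrict_binomial N (G : seq (pt n * bool) -> R) :
  Esample_restrict D f l N G =
  \sum_(0 <= k < N.+1) binom_pmf (mass D l) N k * Esample (cond D l) f k G.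
Proof.
elim: N G => [|N IH] G.
  by rewrite Esample_restrict0 big_nat1 binom_pmf00 mul1r Esample0.
rewrite Esample_restrictS -binom_pmf_mix.
under [in RHS]eq_bigr do rewrite -Esample_cond_step mulr_sumr.
rewrite exchange_big /=; apply: eq_bigr => x _.
rewrite IH mulr_sumr; apply: eq_bigr => k _.
by case: (in_rst x l); rewrite mulrCA.
Qed.

Lemma Esample_restrict_le (m : nat) (eps : R) (G : seq (pt n * bool) -> R) N :
  0 <= eps -> (forall S, G S <= 1) ->
  (forall k, (m <= k)%N -> Esample (cond D l) f k G <= eps) ->
  mass D l * Esample_restrict D f l N G <= mass D l * eps + m%:R / N.+1%:R.
Proof.
move=> eps0 G1 learnG; set p := mass D l.
have p01 : 0 <= p <= 1 by rewrite ltW ?mass_le1.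
have cond_dist := cond_is_dist dD pos_mass; have [cond0 _] := cond_dist.
have Esample_le k : Esample (cond D l) f k G <= (k < m)%:R + eps.
  case: ltnP => [km|mk]; last by rewrite add0r learnG.
  apply: le_trans (ler_Esample _ _ cond0 G1) _.
  by rewrite Esample1 //= mulr1n lerDl.
have mean_le : \sum_(0 <= k < N.+1) binom_pmf p N k * Esample (cond D l) f k G <=
               \sum_(0 <= k < N.+1) binom_pmf p N k * (k < m)%:R + eps.
  apply: le_trans (_ : \sum_(0 <= k < N.+1) binom_pmf p N k * ((k < m)%:R + eps) <= _).
    by apply: ler_sum => k _; rewrite ler_wpM2l ?binom_pmf_ge0.
  by under eq_bigr do rewrite mulrDr; rewrite big_split /= -mulr_suml sum_binom_pmf mul1r.
rewrite Esample_restrict_binomial -/p.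
apply: le_trans (ler_wpM2l (ltW pos_mass) mean_le) _.
by rewrite mulrDr addrC lerD2l binom_tail_bound.
Qed.

End RestrictedSample.

Section TreeLearner.
Variables (R : realFieldType) (n : nat) (D : {ffun pt n -> R}) (f : hyp n).
Hypothesis dD : is_dist D.

Definition leaf_error l (h : hyp n) : R := \sum_(x | in_rst x l) D x * (h x != f x)%:R.

Lemma error_tree_comp d T (H : {ffun rst n -> hyp n}) : is_tree d T ->
  error (tree_comp T H) D f = \sum_(l in T) leaf_error l (H l).
Proof.
move=> tT; rewrite (sum_tree_leaves _ tT) /error; apply: eq_bigr => x _.
by rewrite ffunE; have [l ->] := pick_tree_leaf x tT.
Qed.

Lemma sum_mass_tree d T : is_tree d T -> \sum_(l in T) mass D l = 1.
Proof.
move=> tT; have [_ <-] := dD; rewrite /mass (sum_tree_leaves _ tT).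
by apply: eq_bigr => x _; have [l ->] := pick_tree_leaf x tT.
Qed.

Lemma leaf_error_cond l h : 0 < mass D l -> leaf_error l h = mass D l * error h (cond D l) f.
Proof.
move=> pl; rewrite /leaf_error /error mulr_sumr big_mkcond /=; apply: eq_bigr => x _.
rewrite ffunE; case: (in_rst x l); last by rewrite mul0r mulr0.
by rewrite mulrA [mass D l * _]mulrCA divff ?mulr1 // gt_eqF.
Qed.

Lemma leaf_error_mass0 l h : mass D l = 0 -> leaf_error l h = 0.
Proof.
have [D0 _] := dD; move/psumr_eq0P => Dl0.
by apply: big1 => x xl; rewrite Dl0 ?mul0r.
Qed.

Lemma expected_tree_comp_error d T (a : rst n -> {ffun hyp n -> R}) : is_tree d T ->
  (forall r, is_dist (a r)) ->
  \sum_(H : {ffun rst n -> hyp n}) (\prod_r a r (H r)) * error (tree_comp T H) D f =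
  \sum_(l in T) \sum_h a l h * leaf_error l h.
Proof.
move=> tT da; under eq_bigr do rewrite (error_tree_comp _ tT) mulr_sumr.
rewrite exchange_big /=; apply: eq_bigr => l _.
by rewrite (@sum_prod_ffun_marginal _ _ _ (fun r h => a r h)) // => r; case: (da r).
Qed.

Variable A : learner R n.
Hypothesis dA : forall S, is_dist (A S).

Lemma expected_min_tree_error_le d mt T : is_tree d T ->
  expected_min_tree_error A D f d mt <=
  \sum_(l in T) Esample_restrict D f l mt (fun S => \sum_h A S h * leaf_error l h).
Proof.
move=> tT; have [D0 _] := dD.
rewrite /Esample_restrict exchange_big /=; apply: ler_sum => xs _.
rewrite -mulr_sumr ler_wpM2l ?prodr_ge0 //.
rewrite -(expected_tree_comp_error tT) => [|r]; last exact: dA.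
apply: ler_sum => H _; rewrite ler_wpM2l ?bigmin_le_cond //.
by apply: prodr_ge0 => r _; case: (dA (restrict_sample (sample xs f) r)).
Qed.

Lemma leaf_expected_error_le l (m mt : nat) (eps : R) : 0 <= eps ->
  (0 < mass D l -> forall k, (m <= k)%N ->
     Esample (cond D l) f k (fun S => \sum_h A S h * error h (cond D l) f) <= eps) ->
  Esample_restrict D f l mt (fun S => \sum_h A S h * leaf_error l h) <=
  mass D l * eps + m%:R / mt.+1%:R.
Proof.
move=> eps0 learnA; have := mass_ge0 l dD; rewrite le0r => /orP[/eqP pl0 | pl].
  rewrite pl0 mul0r add0r /Esample_restrict big1 ?divr_ge0 // => xs _.
  by rewrite [X in _ * X]big1 ?mulr0 // => h _; rewrite leaf_error_mass0 ?mulr0.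
have -> : Esample_restrict D f l mt (fun S => \sum_h A S h * leaf_error l h) =
    mass D l * Esample_restrict D f l mt (fun S => \sum_h A S h * error h (cond D l) f).
  rewrite /Esample_restrict mulr_sumr; apply: eq_bigr => xs _.
  rewrite mulrCA [mass D l * _]mulr_sumr.
  by congr (_ * _); apply: eq_bigr => h _; rewrite leaf_error_cond // mulrCA.
apply: Esample_restrict_le => // [S|]; last exact: learnA.
by apply: sum_dist_le1 => // h; apply: error_le1; apply: cond_is_dist.
Qed.

End TreeLearner.

Lemma leaf_overhead_le (R : realFieldType) (eps : R) (d m mt k : nat) : 0 < eps ->
  (2 ^ d)%:R / eps * (maxn (2 * m) 8)%:R <= mt%:R -> (k <= 2 ^ d)%N ->
  k%:R * (m%:R / mt.+1%:R) <= eps.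
Proof.
move=> eps0 hmt kd; rewrite mulrA ler_pdivrMr ?ltr0Sn //.
have mt_ge : (2 ^ d)%:R * (2 * m)%:R <= eps * mt%:R.
  rewrite -ler_pdivrMl // mulrA [eps^-1 * _]mulrC; apply: le_trans hmt.
  apply: ler_wpM2l; first by rewrite divr_ge0 // ltW.
  by rewrite ler_nat leq_maxl.
apply: le_trans (_ : _ <= (2 ^ d)%:R * (2 * m)%:R) _.
  by rewrite -!natrM ler_nat leq_mul // leq_pmull.
by apply: le_trans mt_ge _; rewrite ler_pM2l // ler_nat.
Qed.

Theorem claim6p6 (R : realFieldType) (n : nat)
  (C : hyp n -> Prop) (Dc : {ffun pt n -> R} -> Prop)
  (Ds : {ffun pt n -> R}) (d : nat) (A : learner R n) (m : nat) (eps : R)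
  (mt : nat) (f : hyp n) :
  (forall D, Dc D -> is_dist D) ->
  closed_under_restrictions Dc ->
  is_dist Ds ->
  has_decomposition Ds Dc d ->
  (forall S, is_dist (A S)) ->
  learns C Dc A m eps ->
  0 < eps ->
  (2 ^ d)%:R / eps * (maxn (2 * m) 8)%:R <= mt%:R ->
  C f ->
  expected_min_tree_error A Ds f d mt <= 2 * eps.
Proof.
move=> _ _ dDs [T [tT leafDc]] dA learnA eps0 hmt Cf.
apply: le_trans (expected_min_tree_error_le f dDs dA mt tT) _.
have leaf_le l : l \in T ->
    Esample_restrict Ds f l mt (fun S => \sum_h A S h * leaf_error Ds f l h)
    <= mass Ds l * eps + m%:R / mt.+1%:R.
  move=> lT; apply: leaf_expected_error_le => // [|pl k mk]; first exact: ltW.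
  exact: learnA (leafDc _ lT pl) Cf _ mk.
apply: le_trans (ler_sum _ leaf_le) _.
rewrite big_split /= -[\sum_(l in T) _ * eps]mulr_suml (sum_mass_tree dDs tT) mul1r.
rewrite sumr_const -[_ *+ #|T|]mulr_natl [2 * eps]mulr_natl mulr2n lerD2l.
exact: leaf_overhead_le eps0 hmt (card_tree tT).
Qed.
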